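(* Let $(\mathcal{S},d_{\mathcal{S}})$ be a metric state space and $\mathcal{A}$ an action set. Let $(F,g)$ be a Lipschitz model class with constant $K_F$ and let $\widehat T$ be its generalized transition function. Then $$K^{\mathcal{A}}_{W,W}(\widehat T):=\sup_{a\in\mathcal{A}}\sup_{\mu_1,\mu_2}\frac{W\big(\widehat T(\cdot\mid\mu_1,a),\widehat T(\cdot\mid\mu_2,a)\big)}{W(\mu_1,\mu_2)}\le K_F,$$ where the supremum is over probability distributions $\mu_1\ne\mu_2$ on $\mathcal{S}$.
   Context: A Lipschitz model class is a collection $F$ of functions $f:\mathcal{S}\to\mathcal{S}$ together with, for each $a\in\mathcal{A}$, a probability distribution $g(\cdot\mid a)$ over $F$ (independent of the state), such that $K_F:=\sup_{f\in F}\sup_{s_1\ne s_2}\frac{d_{\mathcal{S}}(f(s_1),f(s_2))}{d_{\mathcal{S}}(s_1,s_2)}<\infty$. Its induced transition is $\widehat T(s'\mid s,a)=\sum_f\mathbb{1}(f(s)=s')g(f\mid a)$ and its generalized transition on a distribution $\mu$ is $\widehat T(s'\mid\mu,a)=\int\widehat T(s'\mid s,a)\mu(s)\,ds$. $W$ is the first Wasserstein metric: $W(\mu_1,\mu_2)=\inf_j\iint j(s_1,s_2)d_{\mathcal{S}}(s_1,s_2)$ over couplings $j$ of $\mu_1,\mu_2$. *)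

From HB Require Import structures.
From mathcomp Require Import all_boot all_order all_algebra.
From mathcomp Require Import all_classical all_reals all_analysis.
Set Implicit Arguments. Unset Strict Implicit. Unset Printing Implicit Defensive.
Import Order.TTheory GRing.Theory Num.Theory.
Local Open Scope classical_set_scope.
Local Open Scope ring_scope.

Definition is_metric (R : realType) (S : Type) (dS : S -> S -> R) : Prop :=
  (forall x y, 0 <= dS x y) /\
  (forall x y, dS x y = 0 <-> x = y) /\
  (forall x y, dS x y = dS y x) /\
  (forall x y z, dS x z <= dS x y + dS y z).

Definition lip_const (R : realType) (S : Type) (dS : S -> S -> R)
  (F : nat -> S -> S) : \bar R :=
  ereal_sup [set x : \bar R | exists (i : nat) (s1 s2 : S),
     s1 <> s2 /\ x = ((dS (F i s1) (F i s2) / dS s1 s2)%:E)].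

Definition coupling (R : realType) (d : measure_display) (S : measurableType d)
  (nu1 nu2 : set S -> \bar R) (j : probability (S * S)%type R) : Prop :=
  (forall A : set S, measurable A -> j (A `*` setT) = nu1 A) /\
  (forall A : set S, measurable A -> j (setT `*` A) = nu2 A).

Definition wasserstein (R : realType) (d : measure_display) (S : measurableType d)
  (dS : S -> S -> R) (nu1 nu2 : set S -> \bar R) : \bar R :=
  ereal_inf [set x : \bar R | exists j : probability (S * S)%type R,
     coupling nu1 nu2 j /\ x = (\int[j]_z (dS z.1 z.2)%:E)%E].

Definition model_trans (R : realType) (S A : Type)
  (F : nat -> S -> S) (g : A -> nat -> R) (s : S) (a : A) (B : set S) : \bar R :=
  (\sum_(i <oo) ((g a i)%:E * (\1_B (F i s))%:E))%E.

Definition gen_trans (R : realType) (d : measure_display) (S : measurableType d)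
  (A : Type) (F : nat -> S -> S) (g : A -> nat -> R)
  (mu : probability S R) (a : A) : set S -> \bar R :=
  fun B => (\int[mu]_s model_trans F g s a B)%E.

From HB Require Import structures.
From mathcomp Require Import all_boot all_order all_algebra.
From mathcomp Require Import all_classical all_reals all_analysis.
From mathcomp Require Import unstable measurable_realfun.
Set Implicit Arguments. Unset Strict Implicit. Unset Printing Implicit Defensive.
Import Order.TTheory GRing.Theory Num.Theory.
Local Open Scope classical_set_scope.
Local Open Scope ring_scope.

(* Fix a coupling j of mu1 and mu2 and run the same random map on both
   coordinates: the mixture over i, with weights g a i, of the pushforwards of
   j along (s1, s2) |-> (F i s1, F i s2) is a coupling of the two generalized
   transitions.  Each F i being K_F-Lipschitz, its transport cost is at most
   K_F times that of j, and taking the infimum over j gives the bound.  When S has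
   at most one point, K_F is the supremum of the empty set, -oo, but then both
   Wasserstein distances vanish. *)

Section probability_mixture.
Local Open Scope ereal_scope.
Context d (T : measurableType d) (R : realType).
Variables (P : nat -> probability T R) (w : nat -> {nonneg R}).

(* The normalisation proof is an argument so that the probability instance
   below is canonical. *)
Definition prob_mixture (_ : \sum_(i <oo) ((w i)%:num)%:E = 1) :
    set T -> \bar R :=
  mseries (fun i => mscale (w i) (P i)) 0.

Hypothesis w1 : \sum_(i <oo) ((w i)%:num)%:E = 1.

HB.instance Definition _ :=
  Measure.copy (prob_mixture w1) (mseries (fun i => mscale (w i) (P i)) 0).

Lemma prob_mixtureE A : prob_mixture w1 A = \sum_(i <oo) ((w i)%:num)%:E * P i A.
Proof. by []. Qed.

Let prob_mixture_setT : prob_mixture w1 setT = 1.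
Proof.
rewrite prob_mixtureE -[RHS]w1; apply: eq_eseriesr => i _.
by rewrite probability_setT mule1.
Qed.

HB.instance Definition _ :=
  Measure_isProbability.Build _ _ _ (prob_mixture w1) prob_mixture_setT.

Lemma ge0_integral_prob_mixture (f : T -> \bar R) :
  measurable_fun [set: T] f -> (forall x, 0 <= f x) ->
  \int[prob_mixture w1]_x f x = \sum_(i <oo) ((w i)%:num)%:E * \int[P i]_x f x.
Proof.
move=> mf f0; rewrite ge0_integral_measure_series//.
by apply: eq_eseriesr => i _; rewrite ge0_integral_mscale.
Qed.

End probability_mixture.
Arguments prob_mixture {d T R} P w.

Section map_pair_measurable.
Context d d' (T : measurableType d) (U : measurableType d') (f : {mfun T >-> U}).

Lemma measurable_map_pair : measurable_fun [set: T * T] (map_pair f).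
Proof. by apply: measurable_fun_pair; exact: measurableT_comp. Qed.

HB.instance Definition _ :=
  isMeasurableFun.Build _ _ _ _ (map_pair f) measurable_map_pair.

End map_pair_measurable.

Section couplings.
Local Open Scope ereal_scope.
Context (R : realType) d (S : measurableType d).

Lemma coupling_product (mu1 mu2 : probability S R) :
  coupling mu1 mu2 (mu1 \x mu2).
Proof.
split => A mA; (apply: eq_trans; first exact: product_measure1E).
- by rewrite -[RHS]mule1; congr (_ * _); exact: probability_setT.
- by rewrite -[RHS]mul1e; congr (_ * _); exact: probability_setT.
Qed.

Lemma coupling_distribution_map_pair d' (S' : measurableType d')
    (f : {mfun S >-> S'}) (mu1 mu2 : probability S R)
    (j : probability (S * S)%type R) :
  coupling mu1 mu2 j ->
  coupling (pushforward mu1 f) (pushforward mu2 f) (distribution j (map_pair f)).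
Proof.
move=> [j1 j2]; split => A mA.
- exact: (j1 _ (measurable_funPTI f mA)).
- exact: (j2 _ (measurable_funPTI f mA)).
Qed.

Lemma coupling_prob_mixture (w : nat -> {nonneg R})
    (w1 : \sum_(i <oo) ((w i)%:num)%:E = 1)
    (P : nat -> probability (S * S)%type R)
    (nu1 nu2 : nat -> set S -> \bar R) :
  (forall i, coupling (nu1 i) (nu2 i) (P i)) ->
  coupling (fun A => \sum_(i <oo) ((w i)%:num)%:E * nu1 i A)
           (fun A => \sum_(i <oo) ((w i)%:num)%:E * nu2 i A)
           (prob_mixture P w w1).
Proof.
move=> jP; split => A mA; apply: eq_eseriesr => i _.
- by congr (_ * _); exact: (jP i).1.
- by congr (_ * _); exact: (jP i).2.
Qed.

End couplings.

Lemma le_ereal_infZl (R : realType) (X : set (\bar R)) (y : \bar R) (k : R) :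
  (0 <= k)%R -> X !=set0 -> (forall x, X x -> (y <= k%:E * x)%E) ->
  (y <= k%:E * ereal_inf X)%E.
Proof.
rewrite le_eqVlt => /orP[/eqP <-|k0] [x0 Xx0] Xy; rewrite ?mul0e.
  by rewrite -(mul0e x0); exact: Xy.
rewrite -ereal_inf_pZl //; apply: le_ereal_inf_tmp => _ [x Xx <-]; exact: Xy.
Qed.

Lemma nneseries_convex_le (R : realType) (w : nat -> R) (c : \bar R) :
  (forall i, 0 <= w i) -> (\sum_(i <oo) (w i)%:E = 1)%E -> (0 <= c)%E ->
  (\sum_(i <oo) (w i)%:E * c <= c)%E.
Proof.
case: c => [c| |] // w0 w1 c0; last by rewrite leey.
under eq_eseriesr do rewrite muleC.
by rewrite nneseriesZl ?w1 ?mule1 // => i _; rewrite lee_fin.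
Qed.

Section lip_const_bounds.
Context (R : realType) (S : Type) (dS : S -> S -> R) (F : nat -> S -> S).
Hypothesis metric_dS : is_metric dS.

Lemma lip_const_ub i (x y : S) : x <> y ->
  ((dS (F i x) (F i y) / dS x y)%:E <= lip_const dS F)%E.
Proof. by move=> xy; apply: ereal_sup_ubound; exists i, x, y. Qed.

Lemma lip_const_ge0 (x y : S) : x <> y -> (0 <= lip_const dS F)%E.
Proof.
have [dS0 _] := metric_dS.
by move=> /(lip_const_ub 0); apply: le_trans; rewrite lee_fin divr_ge0.
Qed.

Lemma lipschitz_lip_const i (x y : S) : lip_const dS F \is a fin_num ->
  dS (F i x) (F i y) <= fine (lip_const dS F) * dS x y.
Proof.
have [dS0 [dS_eq0 _]] := metric_dS.
move=> Lfin; have [<-|xy] := pselect (x = y).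
  by rewrite !(dS_eq0 _ _).2 ?mulr0.
have dS_gt0 : 0 < dS x y by rewrite lt0r dS0 andbT; apply/eqP => /dS_eq0.
by rewrite -ler_pdivrMr // -lee_fin fineK //; exact: lip_const_ub.
Qed.

Lemma lip_const_subsingleton : (forall x y : S, x = y) -> lip_const dS F = -oo%E.
Proof.
move=> allxy; rewrite /lip_const (_ : [set _ | _] = set0) ?ereal_sup0 //.
by apply/seteqP; split => // z [i [x [y [xy _]]]]; exact: xy (allxy x y).
Qed.

End lip_const_bounds.

Section lipschitz_model_class.
Local Open Scope ereal_scope.
Context (R : realType) d (S : measurableType d) (Act : Type).
Variables (F : nat -> S -> S) (g : Act -> nat -> R).
Hypothesis mF : forall i, measurable_fun [set: S] (F i).
Hypothesis g0 : forall a i, (0 <= g a i)%R.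
Hypothesis g1 : forall a, \sum_(i <oo) (g a i)%:E = 1.

Let Fm i : {mfun S >-> S} := mfun_Sub (mem_set (mF i)).

Lemma gen_transE (mu : probability S R) a A : measurable A ->
  gen_trans F g mu a A = \sum_(i <oo) (g a i)%:E * mu (F i @^-1` A).
Proof.
move=> mA; have mFA i : measurable (F i @^-1` A).
  exact: (measurable_funPTI (Fm i)).
transitivity (\int[mu]_s \sum_(i <oo) (g a i)%:E * (\1_(F i @^-1` A) s)%:E) => //.
rewrite integral_nneseries //; last 2 first.
- move=> i; apply/measurable_EFinP/measurable_funM; first exact: measurable_cst.
  exact: measurable_indic.
- by move=> i x _; rewrite -EFinM lee_fin mulr_ge0.
apply: eq_eseriesr => i _.
rewrite ge0_integralZl ?lee_fin //; last exact/measurable_EFinP/measurable_indic.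
by rewrite integral_indic // setIT.
Qed.

Definition synchronous_coupling a (j : probability (S * S)%type R) :=
  prob_mixture (fun i => distribution j (map_pair (Fm i)))
    (fun i => NngNum (g0 a i)) (g1 a).

Lemma coupling_synchronous a (mu1 mu2 : probability S R) j : coupling mu1 mu2 j ->
  coupling (gen_trans F g mu1 a) (gen_trans F g mu2 a) (synchronous_coupling a j).
Proof.
move=> j12; have [j1 j2] := coupling_prob_mixture (w := fun i => NngNum (g0 a i))
  (g1 a) (fun i => coupling_distribution_map_pair (Fm i) j12).
by split => A mA; rewrite gen_transE //; [exact: j1|exact: j2].
Qed.

Variables (dS : S -> S -> R) (K : R).
Hypothesis mdS : measurable_fun [set: S * S] (fun z : S * S => dS z.1 z.2).
Hypothesis dS0 : forall x y, (0 <= dS x y)%R.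
Hypothesis K0 : (0 <= K)%R.
Hypothesis FK : forall i x y, (dS (F i x) (F i y) <= K * dS x y)%R.

Let mcost : measurable_fun [set: S * S] (fun z : S * S => (dS z.1 z.2)%:E).
Proof. exact/measurable_EFinP. Qed.

Lemma integral_synchronous_coupling_le a j :
  \int[synchronous_coupling a j]_z (dS z.1 z.2)%:E <=
  K%:E * \int[j]_z (dS z.1 z.2)%:E.
Proof.
have cost0 z : 0 <= (dS z.1 z.2)%:E by rewrite lee_fin.
have Kcost0 : 0 <= K%:E * \int[j]_z (dS z.1 z.2)%:E.
  by rewrite mule_ge0 ?lee_fin // integral_ge0.
rewrite ge0_integral_prob_mixture //.
apply: le_trans (nneseries_convex_le (g0 a) (g1 a) Kcost0).
apply: lee_nneseries => [i _ _|i _].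
  by rewrite mule_ge0 ?lee_fin ?integral_ge0.
rewrite ge0_integral_distribution //.
apply: lee_wpmul2l; first by rewrite lee_fin.
rewrite -ge0_integralZl ?lee_fin //; apply: ge0_le_integral => //.
- by move=> z _; rewrite /= lee_fin.
- exact: measurableT_comp mcost (measurable_map_pair (Fm i)).
- exact: emeasurable_funM.
- by move=> z _; rewrite -EFinM lee_fin; exact: FK.
Qed.

Lemma wasserstein_gen_trans_le a (mu1 mu2 : probability S R) :
  wasserstein dS (gen_trans F g mu1 a) (gen_trans F g mu2 a) <=
  K%:E * wasserstein dS mu1 mu2.
Proof.
apply: le_ereal_infZl => //; first by exists (\int[mu1 \x mu2]_z (dS z.1 z.2)%:E),
  (mu1 \x mu2); split => //; exact: coupling_product.
move=> _ [j [j12 ->]]; apply: ge_ereal_inf.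
exists (\int[synchronous_coupling a j]_z (dS z.1 z.2)%:E).
  by exists (synchronous_coupling a j); split => //; exact: coupling_synchronous.
exact: integral_synchronous_coupling_le.
Qed.

End lipschitz_model_class.

Lemma wasserstein_subsingleton (R : realType) d (S : measurableType d)
    (dS : S -> S -> R) (mu1 mu2 : probability S R) :
  (forall x, dS x x = 0) -> (forall x y : S, x = y) ->
  wasserstein dS mu1 mu2 = 0%E.
Proof.
move=> dxx allxy.
have cost0 (j : probability (S * S)%type R) : (\int[j]_z (dS z.1 z.2)%:E = 0)%E.
  by under eq_integral => z _ do rewrite (allxy z.1 z.2) dxx; exact: integral0.
rewrite /wasserstein (_ : [set _ | _] = [set 0%E]) ?ereal_inf1 //.
apply/seteqP; split => [_ [j [_ ->]] //|_ ->].
by exists (mu1 \x mu2)%E; split; [exact: coupling_product|rewrite cost0].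
Qed.

Theorem lemma1 (R : realType) (d : measure_display) (S : measurableType d)
  (dS : S -> S -> R) (Act : Type) (F : nat -> S -> S) (g : Act -> nat -> R) :
  is_metric dS ->
  measurable_fun [set: S * S] (fun z : S * S => dS z.1 z.2) ->
  (forall i, measurable_fun [set: S] (F i)) ->
  (forall a i, 0 <= g a i) ->
  (forall a, (\sum_(i <oo) (g a i)%:E)%E = 1%E) ->
  (lip_const dS F < +oo)%E ->
  forall (a : Act) (mu1 mu2 : probability S R), mu1 <> mu2 ->
    (wasserstein dS (gen_trans F g mu1 a) (gen_trans F g mu2 a)
     <= lip_const dS F * wasserstein dS mu1 mu2)%E.
Proof.
(* mu1 <> mu2 only makes the paper's ratio meaningful; the bound needs no such
   assumption. *)
move=> metric_dS mdS mF g0 g1 lipF a mu1 mu2 _.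
have [dS0 [dS_eq0 _]] := metric_dS.
have dxx x : dS x x = 0 by exact/dS_eq0.
have [[x [y xy]]|S_trivial] := pselect (exists x y : S, x <> y).
  have L0 := lip_const_ge0 F metric_dS xy.
  have Lfin : lip_const dS F \is a fin_num by rewrite ge0_fin_numE.
  rewrite -(fineK Lfin); apply: wasserstein_gen_trans_le => //.
  - by rewrite -lee_fin fineK.
  - by move=> i u v; exact: lipschitz_lip_const.
have allxy (x y : S) : x = y.
  by apply: contrapT => xy; apply: S_trivial; exists x, y.
rewrite lip_const_subsingleton // wasserstein_subsingleton // mule0.
have F0 i u v : dS (F i u) (F i v) <= 0 * dS u v.
  by rewrite (allxy u v) !dxx mul0r.
have := wasserstein_gen_trans_le mF g0 g1 mdS dS0 (lexx 0) F0 a mu1 mu2.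
by rewrite mul0e.
Qed.
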